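(* For each $n\geq1$ let $\mathcal P_n$ be a polytope in $\mathbb R^k$ with $\mathcal P_{n+1}\subseteq\mathcal P_n$ for all $n$. Let $\mathcal P:=\bigcap_n\mathcal P_n$ and let $p$ be an extreme point of $\mathcal P$. Then for each $n$ there exists a vertex $p_n$ of $\mathcal P_n$ such that $\lim_{n\to\infty}p_n=p$.
   Context: A polytope is the convex hull of finitely many points of $\mathbb R^k$; its vertices are its extreme points. *)

(* R : realType, points of R^k are row vectors 'rV[R]_k
   with the canonical (product/sup-norm) topology on matrices. *)
From HB Require Import structures.
From mathcomp Require Import all_boot all_order all_algebra.
From mathcomp Require Import all_classical all_reals all_analysis.
Set Implicit Arguments. Unset Strict Implicit. Unset Printing Implicit Defensive.
Import Order.TTheory GRing.Theory Num.Theory.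
Import numFieldNormedType.Exports.
Local Open Scope classical_set_scope.
Local Open Scope ring_scope.

Definition conv_hull (R : realType) (k : nat) (S : seq 'rV[R]_k) : set 'rV[R]_k :=
  [set x | exists w : 'I_(size S) -> R,
      (forall i, 0 <= w i) /\ \sum_(i < size S) w i = 1 /\
      x = \sum_(i < size S) w i *: S`_(nat_of_ord i)].

Definition is_polytope (R : realType) (k : nat) (A : set 'rV[R]_k) : Prop :=
  exists S : seq 'rV[R]_k, A = conv_hull S.

Definition extreme_point (R : realType) (k : nat) (A : set 'rV[R]_k) (x : 'rV[R]_k) : Prop :=
  A x /\ forall y z t, A y -> A z -> 0 < t < 1 -> x = t *: y + (1 - t) *: z -> y = z.

(* Write each P n as the convex hull of a finite set T n of its own extreme points and let
   q n be a point of T n nearest to p.  If infinitely many T n stayed at sup-distance >= e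
   from p, then, since the complement of the open e-ball around p is covered by the 2k closed
   convex half-spaces x_j >= p_j + e and x_j <= p_j - e, grouping the points of T n by
   half-space would write p as a convex combination of 2k points of P n, each lying in its
   half-space unless its weight vanishes.  Everything lives in the compact set P 0, so a limit
   along an ultrafilter writes p as a convex combination of points of the closed convex set
   \bigcap_n P n in which a point of positive weight lies in a half-space missing p: this
   contradicts the extremality of p. *)

From HB Require Import structures.
From mathcomp Require Import all_boot all_order all_algebra.
From mathcomp Require Import all_classical all_reals all_analysis.
From mathcomp Require Import ring lra.
Import Order.TTheory GRing.Theory Num.Theory.
Import numFieldNormedType.Exports.
Local Open Scope classical_set_scope.
Local Open Scope ring_scope.
Set Implicit Arguments. Unset Strict Implicit. Unset Printing Implicit Defensive.

Section ConvexSets.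
Variables (R : numFieldType) (E : lmodType R).

Definition convex (C : set E) : Prop := forall x y t, C x -> C y -> 0 <= t <= 1 ->
  C (t *: x + (1 - t) *: y).

Lemma convex_sum (C : set E) (I : eqType) (r : seq I) (P : pred I)
    (w : I -> R) (y : I -> E) : convex C ->
  (forall i, P i -> 0 <= w i) -> (forall i, P i -> C (y i)) ->
  \sum_(i <- r | P i) w i = 1 -> C (\sum_(i <- r | P i) w i *: y i).
Proof.
move=> C_convex; elim: r w => [|a r IH] w w0 Cy.
  by rewrite big_nil => /esym/eqP; rewrite oner_eq0.
rewrite !big_cons; case: ifP => Pa; last exact: IH.
set s := \sum_(i <- r | P i) w i => sum_w.
have s0 : 0 <= s by apply: sumr_ge0.
have [s_eq0|s_neq0] := eqVneq s 0.
  have -> : \sum_(i <- r | P i) w i *: y i = 0.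
    rewrite big1_seq // => i /andP [Pi ir].
    have : all (fun i => P i ==> (w i == 0)) r by rewrite -psumr_eq0 // -/s s_eq0.
    by move/allP/(_ i ir); rewrite Pi /= => /eqP ->; rewrite scale0r.
  have -> : w a = 1 by rewrite -sum_w s_eq0 addr0.
  by rewrite scale1r addr0; apply: Cy.
have wa : w a = 1 - s by rewrite -sum_w addrK.
have -> : \sum_(i <- r | P i) w i *: y i =
    (1 - w a) *: \sum_(i <- r | P i) (w i / s) *: y i.
  rewrite wa opprB addrCA subrr addr0 scaler_sumr; apply: eq_bigr => i _.
  by rewrite scalerA mulrCA divff // mulr1.
apply: C_convex; [exact: Cy| |].
  apply: IH => [i Pi|i Pi|]; [by rewrite divr_ge0 // w0 | exact: Cy |].
  by rewrite -mulr_suml divff.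
by rewrite w0 //= wa lerBlDr lerDl.
Qed.

Lemma convex_bigcap (I : Type) (C : I -> set E) :
  (forall i, convex (C i)) -> convex (\bigcap_i C i).
Proof.
by move=> C_convex x y t Cx Cy t01 i _; apply: C_convex => //; [exact: Cx | exact: Cy].
Qed.

End ConvexSets.

Lemma exists_argmin_seq (T : eqType) d (O : orderType d) (f : T -> O) (s : seq T) :
  s != [::] -> exists t, t \in s /\ forall t', t' \in s -> (f t <= f t')%O.
Proof.
elim: s => [//|x s IH] _.
have [->|/IH [t [ts ht]]] := eqVneq s [::].
  by exists x; split=> [|t']; rewrite ?mem_head // inE => /eqP ->.
have [fx|fx] := leP (f x) (f t).
  exists x; split=> [|t']; first exact: mem_head.
  by rewrite inE => /orP[/eqP -> //|/ht]; apply: le_trans.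
exists t; split=> [|t']; first by rewrite inE ts orbT.
by rewrite inE => /orP[/eqP ->|/ht //]; apply: ltW.
Qed.

Lemma ultra_refine_frequently (T : Type) (F : set_system T) (A : set T) :
  Filter F -> ~ F (~` A) -> exists U, [/\ UltraFilter U, F `<=` U & U A].
Proof.
move=> FF nFA.
have WA : ProperFilter (within A F).
  apply: (Build_ProperFilter _ (within_filter A FF)).
  by rewrite /within /= => WA0; apply: nFA; apply: filterS WA0.
have [U [UU WU]] := ultraFilterLemma WA.
exists U; split => // [B FB|]; apply: WU; last exact: withinT.
by rewrite /within /=; apply: filterS FB => x Bx _.
Qed.

Lemma ultra_cvg_in_compact (X : Type) (U : set_system X) (T : topologicalType)
    (f : X -> T) (K : set T) :
  UltraFilter U -> compact K -> U (f @^-1` K) -> exists c, K c /\ f @ U --> c.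
Proof.
move=> UU cK UK.
have [c [Kc clc]] := cK (f @ U) (fmap_proper_filter f (@ultra_proper _ _ UU)) UK.
exists c; split => // B nB /=.
have [//|UnB] := in_ultra_setVsetC (f @^-1` B) UU.
by have [x [/= + +]] := clc (~` B) B UnB nB.
Qed.

Lemma cvg_sumZ (R : numFieldType) (V : normedModType R) (X : Type)
    (F : set_system X) (I : finType) (mu : X -> I -> R) (c : X -> I -> V)
    (a : I -> R) (b : I -> V) : Filter F ->
  (forall i, mu x i @[x --> F] --> a i) -> (forall i, c x i @[x --> F] --> b i) ->
  \sum_i mu x i *: c x i @[x --> F] --> \sum_i a i *: b i.
Proof.
by move=> FF mu_a c_b; apply: cvg_big => [|i _]; [exact: add_continuous | exact: cvgZ].
Qed.

Lemma ultra_limit_weights (R : realType) (X : Type) (U : set_system X)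
    (I : finType) (mu : X -> I -> R) : UltraFilter U ->
  U [set x | (forall i, 0 <= mu x i) /\ \sum_i mu x i = 1] ->
  exists a : I -> R,
    [/\ forall i, 0 <= a i, \sum_i a i = 1 & forall i, mu x i @[x --> U] --> a i].
Proof.
move=> UU Umu.
have lim_mu i : exists a : R, `[0, 1]%classic a /\ mu x i @[x --> U] --> a.
  apply: ultra_cvg_in_compact => //; first exact: segment_compact.
  apply: filterS Umu => x [mu0 mu1] /=; rewrite in_itv /= mu0 /= -mu1.
  by rewrite (bigD1 i) //= lerDl sumr_ge0.
have [a ha] := choice lim_mu.
exists a; split=> [i|| i]; last exact: (ha i).2.
  by have [/= + _] := ha i; rewrite in_itv /= => /andP[].
have sum_mu : \sum_i mu x i @[x --> U] --> \sum_i a i.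
  by apply: cvg_big => [|i _]; [exact: add_continuous | exact: (ha i).2].
apply: (cvg_unique (@norm_hausdorff _ _) sum_mu); apply: cvg_near_cst.
by apply: filterS Umu => x [].
Qed.

Section Polytopes.
Variables (R : realType) (k : nat).
Local Notation V := 'rV[R]_k.
Implicit Types (S T : seq V) (C : set V).

Lemma conv_hull_nil (x : V) : ~ conv_hull [::] x.
Proof. by move=> [w [_ [+ _]]]; rewrite big_ord0 => /eqP; rewrite eq_sym oner_eq0. Qed.

Lemma mem_conv_hull S x : x \in S -> conv_hull S x.
Proof.
move=> xS; have iS : (index x S < size S)%N by rewrite index_mem.
pose i0 : 'I_(size S) := Ordinal iS.
exists (fun i => (i == i0)%:R); split; [|split].
- by move=> i; rewrite ler0n.
- by rewrite (bigD1 i0) //= eqxx big1 ?addr0 // => i /negbTE ->.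
- rewrite (bigD1 i0) //= eqxx scale1r big1 ?addr0 ?nth_index //.
  by move=> i /negbTE ->; rewrite scale0r.
Qed.

Lemma conv_hull_convex S : convex (conv_hull S).
Proof.
move=> x y t [a [a0 [a1 ->]]] [b [b0 [b1 ->]]] /andP[t0 t1].
exists (fun i => t * a i + (1 - t) * b i); split; [|split].
- by move=> i; rewrite addr_ge0 // mulr_ge0 // ?subr_ge0.
- by rewrite big_split /= -!mulr_sumr a1 b1 !mulr1 addrCA subrr addr0.
- rewrite !scaler_sumr -big_split /=; apply: eq_bigr => i _.
  by rewrite [in RHS]scalerDl !scalerA.
Qed.

Lemma conv_hull_sub S C : convex C -> (forall x, x \in S -> C x) ->
  conv_hull S `<=` C.
Proof.
move=> C_convex SC x [w [w0 [w1 ->]]].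
by apply: (@convex_sum _ _ C _ _ predT) => // i _; apply/SC/mem_nth.
Qed.

Lemma conv_hull_eq S T : (forall x, x \in S -> conv_hull T x) ->
  (forall x, x \in T -> conv_hull S x) -> conv_hull S = conv_hull T.
Proof.
by move=> ST TS; rewrite eqEsubset; split;
  apply: conv_hull_sub => //; apply: conv_hull_convex.
Qed.

Lemma conv_hull_perm S T : perm_eq S T -> conv_hull S = conv_hull T.
Proof.
by move=> /perm_mem eqST; apply: conv_hull_eq => x xS; apply: mem_conv_hull;
  rewrite ?eqST // -eqST.
Qed.

Lemma conv_hull_rem S s : s \in S -> conv_hull (rem s S) s ->
  conv_hull (rem s S) = conv_hull S.
Proof.
move=> sS s_red; have memS := perm_mem (perm_to_rem sS).
apply: conv_hull_eq => x.
  by move=> xS; apply: mem_conv_hull; rewrite memS inE xS orbT.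
by rewrite memS inE => /orP[/eqP -> //|xS]; apply: mem_conv_hull.
Qed.

Lemma conv_hull_rescale S (w : 'I_(size S) -> R) x : (forall i, 0 <= w i) ->
  0 < \sum_i w i -> (\sum_i w i) *: x = \sum_i w i *: S`_i -> conv_hull S x.
Proof.
move=> w0 /lt0r_neq0 sw0 hx; exists (fun i => w i / \sum_i w i); split; [|split].
- by move=> i; rewrite divr_ge0 ?sumr_ge0.
- by rewrite -mulr_suml divff.
- apply: (scalerI sw0); rewrite hx scaler_sumr; apply: eq_bigr => i _.
  by rewrite scalerA mulrCA divff ?mulr1.
Qed.

Lemma conv_hull_cons s S y : conv_hull (s :: S) y ->
  exists a : 'I_(size S) -> R, [/\ forall i, 0 <= a i, \sum_i a i <= 1 &
    y = (1 - \sum_i a i) *: s + \sum_i a i *: S`_i].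
Proof.
move=> [w [w0 [w1 ->]]]; exists (fun i => w (lift ord0 i)).
move: w1; rewrite big_ord_recl => w1.
have -> : 1 - \sum_i w (lift ord0 i) = w ord0 by rewrite -w1 addrK.
by split=> //; [rewrite -w1 lerDr | rewrite big_ord_recl].
Qed.

Lemma conv_hull_cons_eq s S (a : 'I_(size S) -> R) : (forall i, 0 <= a i) ->
  \sum_i a i = 0 -> (1 - \sum_i a i) *: s + \sum_i a i *: S`_i = s.
Proof.
move=> a0 sa0; rewrite sa0 subr0 scale1r big1 ?addr0 // => i _.
by rewrite (psumr_eq0P (fun i _ => a0 i) sa0) ?scale0r.
Qed.

Lemma extreme_point_conv_hull S s : s \in S -> ~ conv_hull (rem s S) s ->
  extreme_point (conv_hull S) s.
Proof.
move=> sS s_nred; split; first exact: mem_conv_hull.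
rewrite (conv_hull_perm (perm_to_rem sS)).
move=> y z t /conv_hull_cons [a [a0 a1 ->]] /conv_hull_cons [b [b0 b1 ->]].
move=> /andP[t0 t1] hs; set sa := \sum_i a i in a1 hs *; set sb := \sum_i b i in b1 hs *.
set A := \sum_i a i *: _ in hs *; set B := \sum_i b i *: _ in hs *.
have sa0 : 0 <= sa by apply: sumr_ge0.
have sb0 : 0 <= sb by apply: sumr_ge0.
pose w i := t * a i + (1 - t) * b i.
have w0 i : 0 <= w i by rewrite addr_ge0 ?mulr_ge0 ?a0 ?b0 ?subr_ge0 ?ltW.
have sw : \sum_i w i = t * sa + (1 - t) * sb by rewrite big_split /= -!mulr_sumr.
have hsw : (\sum_i w i) *: s = \sum_i w i *: (rem s S)`_i.
  have -> : \sum_i w i *: (rem s S)`_i = t *: A + (1 - t) *: B.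
    rewrite /A /B !scaler_sumr -big_split; apply: eq_bigr => i _.
    by rewrite /w scalerDl !scalerA.
  have -> : \sum_i w i = 1 - (t * (1 - sa) + (1 - t) * (1 - sb)) by rewrite sw; ring.
  rewrite scalerBl scale1r {1}hs !scalerDr !scalerA [(_ + _) *: s]scalerDl.
  by apply/eqP; rewrite subr_eq addrACA [in X in _ == X]addrC.
have [sw_gt0|] := ltP 0 (\sum_i w i).
  by case: s_nred; apply: conv_hull_rescale hsw.
rewrite sw => sw_le0.
have sa_eq0 : sa = 0 by nra.
have sb_eq0 : sb = 0 by nra.
by rewrite !conv_hull_cons_eq.
Qed.

Lemma conv_hull_extreme_points S : exists T,
  conv_hull T = conv_hull S /\ forall t, t \in T -> extreme_point (conv_hull S) t.
Proof.
move: {2}(size S) (leqnn (size S)) => n; elim: n S => [|n IH] S leSn.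
  by exists S; split=> // t; case: S leSn.
have [[s sS s_red]|s_nred] := pselect (exists2 s, s \in S & conv_hull (rem s S) s).
  have [|T [TS Text]] := IH (rem s S).
    by rewrite size_rem // -subn1 leq_subLR add1n.
  by exists T; rewrite -(conv_hull_rem sS s_red).
exists S; split=> // t tS; apply: extreme_point_conv_hull => // t_red.
by apply: s_nred; exists t.
Qed.

Lemma conv_hull_compact S : compact (conv_hull S).
Proof.
rewrite compact_ultra => F UF FS.
have weights z : exists w : 'I_(size S) -> R, conv_hull S z ->
    [/\ forall i, 0 <= w i, \sum_i w i = 1 & z = \sum_i w i *: S`_i].
  have [[w [w0 [w1 ->]]]|] := pselect (conv_hull S z); first by exists w.
  by exists (fun=> 0).
have [w hw] := choice weights.
have Fw : F [set z | (forall i, 0 <= w z i) /\ \sum_i w z i = 1].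
  by apply: filterS FS => z /hw [].
have [a [a0 a1 wa]] := ultra_limit_weights UF Fw.
exists (\sum_i a i *: S`_i); split; first by exists a.
have Fz : (fun z => z) @ F --> \sum_i a i *: S`_i.
  apply: cvg_trans
    (cvg_sumZ (c := fun _ (i : 'I_(size S)) => S`_i) _ wa (fun i => cvg_cst _)).
  by apply: near_eq_cvg; apply: filterS FS => z /hw [_ _].
exact: Fz.
Qed.

Lemma conv_hull_closed S : closed (conv_hull S).
Proof. by apply: compact_closed; [exact: norm_hausdorff | exact: conv_hull_compact]. Qed.

Lemma extreme_point_convex_sum C (I : finType) (a : I -> R) (b : I -> V) p r :
  convex C -> extreme_point C p -> (forall i, 0 <= a i) -> \sum_i a i = 1 ->
  (forall i, C (b i)) -> \sum_i a i *: b i = p -> 0 < a r -> b r = p.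
Proof.
move=> cC [_ p_ext] a0 a1 Cb sum_p ar.
move: a1 sum_p; rewrite (bigD1 r) //=; set s := \sum_(i | i != r) a i => a1.
rewrite (bigD1 r) //=.
have s0 : 0 <= s by apply: sumr_ge0.
have [s_eq0|s_neq0] := eqVneq s 0.
  have -> : a r = 1 by rewrite -a1 s_eq0 addr0.
  rewrite scale1r big1 ?addr0 // => i ir.
  by rewrite (psumr_eq0P (fun i _ => a0 i) s_eq0) ?scale0r.
pose z := \sum_(i | i != r) (a i / s) *: b i.
have Cz : C z.
  by apply: convex_sum => // [i _|]; [rewrite divr_ge0 | rewrite -mulr_suml divff].
have ar_s : 1 - a r = s by rewrite -a1 addrAC subrr add0r.
have -> : \sum_(i | i != r) a i *: b i = (1 - a r) *: z.
  rewrite ar_s scaler_sumr; apply: eq_bigr => i _.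
  by rewrite scalerA mulrCA divff // mulr1.
have ar1 : a r < 1 by rewrite -subr_gt0 ar_s lt0r s_neq0.
move=> p_def; have brz : b r = z by apply: (p_ext _ _ (a r)); rewrite ?ar ?ar1.
by rewrite -p_def -brz -scalerDl addrC subrK scale1r.
Qed.

Definition far_halfspace (p : V) (e : R) (r : 'I_k * bool) : set V :=
  [set x | if r.2 then p ord0 r.1 + e <= x ord0 r.1 else x ord0 r.1 <= p ord0 r.1 - e].

Lemma far_halfspace_convex p e r : convex (far_halfspace p e r).
Proof.
by move=> x y t; rewrite /far_halfspace /=; case: r.2 => hx hy /andP[t0 t1];
  rewrite !mxE; nra.
Qed.

Lemma far_halfspace_closed p e r : closed (far_halfspace p e r).
Proof.
pose coord (x : V) := x ord0 r.1.
have coord_cont D : {in ~` coord @^-1` D, continuous coord}.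
  by move=> x _; apply: coord_continuous.
rewrite /far_halfspace; case: r.2.
  by apply: (@preimage_closed _ _ coord [set y | p ord0 r.1 + e <= y]) => //;
    apply: closed_ge.
by apply: (@preimage_closed _ _ coord [set y | y <= p ord0 r.1 - e]) => //;
  apply: closed_le.
Qed.

Lemma far_halfspace_center p e r : 0 < e -> ~ far_halfspace p e r p.
Proof. by rewrite /far_halfspace /=; case: r.2 => e0; lra. Qed.

Lemma far_halfspace_cover (p x : V) e : 0 < e -> e <= `|p - x| ->
  exists r, far_halfspace p e r x.
Proof.
move=> e0 px_far.
(* the sup norm of p - x is attained at some coordinate j *)
have /mx_norm_neq0 [[i j] /= px] : mx_norm (p - x) != 0.
  by apply/eqP => px0; move: px_far; rewrite [`|_|]px0; lra.
move: px_far; rewrite [`|_|]px (ord1 i) !mxE ler_normr => /orP[px_ge|px_le].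
  by exists (j, false); rewrite /far_halfspace /=; lra.
by exists (j, true); rewrite /far_halfspace /=; lra.
Qed.

Lemma conv_hull_cover_decomp (I : finType) (D : I -> set V) S p :
  (forall i, convex (D i)) -> (forall t, t \in S -> exists i, D i t) ->
  conv_hull S p -> exists (mu : I -> R) (c : I -> V),
  [/\ forall i, 0 <= mu i, \sum_i mu i = 1, \sum_i mu i *: c i = p,
      forall i, conv_hull S (c i) & forall i, mu i = 0 \/ D i (c i)].
Proof.
move=> D_convex D_cover pS; have [w [w0 [w1 p_def]]] := pS.
have [rho rhoD] := choice (fun j : 'I_(size S) => D_cover _ (mem_nth 0 (ltn_ord j))).
pose mu i := \sum_(j | rho j == i) w j.
pose c i := if mu i == 0 then p else \sum_(j | rho j == i) (w j / mu i) *: S`_j.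
have mu0 i : 0 <= mu i by apply: sumr_ge0.
have c_mem i C : mu i != 0 -> convex C -> (forall j, rho j = i -> C S`_j) -> C (c i).
  move=> mu_neq0 C_convex CS; rewrite /c (negbTE mu_neq0).
  apply: convex_sum => // [j _|j /eqP/CS //|]; first by rewrite divr_ge0.
  by rewrite -mulr_suml divff.
have mu_c i : mu i *: c i = \sum_(j | rho j == i) w j *: S`_j.
  rewrite /c; case: eqP => [mu_eq0|/eqP mu_neq0].
    rewrite mu_eq0 scale0r big1 // => j rhoj.
    by rewrite (psumr_eq0P (fun j _ => w0 j) mu_eq0) ?scale0r.
  rewrite scaler_sumr; apply: eq_bigr => j _.
  by rewrite scalerA mulrCA divff // mulr1.
exists mu, c; split=> [//||||i].
- by rewrite -w1 (partition_big rho predT).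
- by rewrite p_def (partition_big rho predT) //; apply: eq_bigr => i _; apply: mu_c.
- move=> i; have [mu_eq0|mu_neq0] := eqVneq (mu i) 0; first by rewrite /c mu_eq0 eqxx.
  by apply: c_mem => // [|j _]; [apply: conv_hull_convex | apply/mem_conv_hull/mem_nth].
- have [mu_eq0|mu_neq0] := eqVneq (mu i) 0; [by left | right].
  by apply: c_mem => // j <-.
Qed.

End Polytopes.

Section Approximation.
Variables (R : realType) (k : nat) (P : nat -> set 'rV[R]_k) (T : nat -> seq 'rV[R]_k).
Variable p : 'rV[R]_k.
Hypotheses (PT : forall n, P n = conv_hull (T n)) (P_dec : forall n, P n.+1 `<=` P n).
Hypothesis p_extreme : extreme_point (\bigcap_n P n) p.

Let P_antitone m n : (m <= n)%N -> P n `<=` P m.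
Proof.
apply: (@homo_leq _ P (fun A B => B `<=` A)) => [A|A B C BA CB|i].
- exact: subset_refl.
- exact: subset_trans CB BA.
- exact: P_dec.
Qed.

Let P_closed n : closed (P n).
Proof. by rewrite PT; apply: conv_hull_closed. Qed.

Lemma not_ultra_far_vertices e U : 0 < e -> UltraFilter U -> \oo `<=` U ->
  ~ U [set n | forall t, t \in T n -> e <= `|p - t|].
Proof.
move=> e0 UU oo_U U_far; have U_proper : ProperFilter U := @ultra_proper _ _ UU.
pose I := ('I_k * bool)%type.
have decomp n : exists mc : (I -> R) * (I -> 'rV[R]_k),
    (forall t, t \in T n -> e <= `|p - t|) ->
    [/\ forall r, 0 <= mc.1 r, \sum_r mc.1 r = 1, \sum_r mc.1 r *: mc.2 r = p,
      forall r, P n (mc.2 r) & forall r, mc.1 r = 0 \/ far_halfspace p e r (mc.2 r)].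
  have [far_n|] := pselect (forall t, t \in T n -> e <= `|p - t|); last first.
    by exists (fun=> 0, fun=> 0).
  have pT : conv_hull (T n) p by rewrite -PT; apply: p_extreme.1.
  have cover t : t \in T n -> exists r, far_halfspace p e r t.
    by move=> /far_n; apply: far_halfspace_cover.
  have [mu [c]] := conv_hull_cover_decomp (@far_halfspace_convex _ _ p e) cover pT.
  by exists (mu, c); rewrite PT.
have [mc U_mc] := choice decomp.
have {}U_mc := @filterS _ U U_proper _ _ U_mc U_far.
have U_mu : U [set n | (forall r, 0 <= (mc n).1 r) /\ \sum_r (mc n).1 r = 1].
  by apply: filterS U_mc => n [].
have [a [a0 a1 mu_a]] := ultra_limit_weights UU U_mu.
have c_lim r : exists b, P 0 b /\ (mc n).2 r @[n --> U] --> b.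
  apply: ultra_cvg_in_compact => //; first by rewrite PT; apply: conv_hull_compact.
  by apply: filterS U_mc => n [_ _ _ /(_ r) /(P_antitone (leq0n n))].
have [b c_b] := choice c_lim.
have sum_ab : \sum_r a r *: b r = p.
  apply: (cvg_unique (@norm_hausdorff _ _) (cvg_sumZ _ mu_a (fun r => (c_b r).2))).
  by apply: cvg_near_cst; apply: filterS U_mc => n [].
have b_cap r : (\bigcap_n P n) (b r).
  move=> m _; apply: (closed_cvg _ (@P_closed m) _ _ (c_b r).2).
  apply: filterS2 U_mc (oo_U _ (nbhs_infty_ge m)) => n [_ _ _ cP _] mn.
  exact: P_antitone mn _ (cP r).
have [r ar] : exists r, 0 < a r.
  have sum_neq0 : \sum_r a r <> 0 by rewrite a1; apply/eqP/oner_neq0.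
  by have [r /andP [_ ar]] := psumr_neq0P (fun r _ => a0 r) sum_neq0; exists r.
have b_far : far_halfspace p e r (b r).
  apply: (closed_cvg _ (@far_halfspace_closed _ _ p e r) _ _ (c_b r).2).
  apply: filterS2 U_mc (cvgr_gt _ (mu_a r) _ ar) => n [_ _ _ _ /(_ r) [-> |//]].
  by rewrite ltxx.
have P_convex n : convex (P n) by rewrite PT; apply: conv_hull_convex.
have := extreme_point_convex_sum (convex_bigcap P_convex) p_extreme a0 a1 b_cap.
by move=> /(_ _ sum_ab ar) b_p; move: b_far; rewrite b_p; apply: far_halfspace_center.
Qed.

Lemma vertex_near_extreme_point e : 0 < e ->
  \forall n \near \oo, exists2 t, t \in T n & `|p - t| < e.
Proof.
move=> e0; apply: contrapT => not_near.
have [|U [UU oo_U]] := @ultra_refine_frequently _ \oo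
    [set n | forall t, t \in T n -> e <= `|p - t|] _.
  apply: contra_not not_near; apply: filterS => n /existsNP [t /not_implyP [tT]].
  by move=> /negP; rewrite -ltNge; exists t.
exact: not_ultra_far_vertices.
Qed.

End Approximation.

Theorem lemma1 (R : realType) (k : nat) (P : nat -> set 'rV[R]_k)
    (hpoly : forall n, is_polytope (P n))
    (hdec : forall n, P n.+1 `<=` P n)
    (p : 'rV[R]_k)
    (hp : extreme_point (\bigcap_n P n) p) :
  exists q : nat -> 'rV[R]_k,
    (forall n, extreme_point (P n) (q n)) /\ q @ \oo --> (p : 'rV[R]_k).
Proof.
have [S PS] := choice hpoly.
have [T T_ext] := choice (fun n => conv_hull_extreme_points (S n)).
have PT n : P n = conv_hull (T n) by rewrite PS (T_ext n).1.
have T_neq0 n : T n != [::].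
  by apply: contra_notN (conv_hull_nil (x := p)) => /eqP <-; rewrite -PT; apply: hp.1.
have [q q_min] := choice (fun n => exists_argmin_seq (fun t => `|p - t|) (T_neq0 n)).
exists q; split=> [n|]; first by rewrite PS; apply/(T_ext n).2/(q_min n).1.
apply/cvgrPdist_lt => e e0.
apply: filterS (vertex_near_extreme_point PT hdec hp e0) => n [t tT pt].
exact: le_lt_trans ((q_min n).2 t tT) pt.
Qed.
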